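(* Let $\mathbf C$ be a clone $\tau$-algebra and $a,b\in C$ of finite dimension. Then: (1) for $f\in R_{\mathbf C}$ of arity $n$ and $g\in R_{\mathbf C}$ of arity $k$, $f$ and $g$ are similar if and only if $f(\mathsf e_1,\dots,\mathsf e_n)=g(\mathsf e_1,\dots,\mathsf e_k)$; (2) $R(a)$ is a block; (3) if $R(a)=R(b)$ then $a=b$; (4) $R_{\mathbf C}=\bigcup_{c\in\mathrm{Fi}\,\mathbf C}R(c)$ and it is a clone on the $\tau$-reduct $\mathbf C_\tau$; (5) the block $R(a)$ has arity $k$ if and only if $a$ has dimension $k$.
   Context: A clone $\tau$-algebra is an algebra $\mathbf C=(C,\sigma^{\mathbf C}\ (\sigma\in\tau),q_n^{\mathbf C}\ (n\ge0),\mathsf e_i^{\mathbf C}\ (i\ge1))$ with $\mathsf e_i$ nullary, $q_n$ of arity $n+1$, satisfying: (C1) $q_n(\mathsf e_i,x_1,\dots,x_n)=x_i$ ($1\le i\le n$); (C2) $q_n(\mathsf e_j,x_1,\dots,x_n)=\mathsf e_j$ ($j>n$); (C3) $q_n(x,\mathsf e_1,\dots,\mathsf e_n)=x$; (C4) $q_k(x,y_1,\dots,y_k)=q_n(x,y_1,\dots,y_k,\mathsf e_{k+1},\dots,\mathsf e_n)$ ($n>k$); (C5) $q_n(q_n(x,\mathbf y),\mathbf z)=q_n(x,q_n(y_1,\mathbf z),\dots,q_n(y_n,\mathbf z))$; (C6) $q_n(\sigma(x_1,\dots,x_k),\mathbf y)=\sigma(q_n(x_1,\mathbf y),\dots,q_n(x_k,\mathbf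 y))$ for $\sigma\in\tau$ of arity $k$. $a$ is independent of $\mathsf e_n$ if $q_n(a,\mathsf e_1,\dots,\mathsf e_{n-1},\mathsf e_{n+1})=a$; its dimension is $0$ if it depends on no $\mathsf e_n$, otherwise the largest $n$ it depends on (infinite if infinitely many). $\mathrm{Fi}\,\mathbf C$ is the set of finite-dimensional elements. A function $f:C^k\to C$ is $\mathbf C$-representable if $f(\mathsf e_1,\dots,\mathsf e_k)$ has dimension $\le k$ and $f(a_1,\dots,a_k)=q_k(f(\mathsf e_1,\dots,\mathsf e_k),a_1,\dots,a_k)$ for all $a_i$; $R_{\mathbf C}$ is the set of all of them. For finite-dimensional $a$, $R(a)$ is the set of $\mathbf C$-representable $f$ (of any arity $n$) with $f(\mathsf e_1,\dots,\mathsf e_n)=a$. For finitary operations $f:A^k\to A$, $g:A^n\to A$, write $f\preceq g$ if $k\le n$ and $f(\mathbf a)=g(\mathbf a,\mathbf b)$ for all $\mathbf a\in A^k$, $\mathbf b\in A^{n-k}$; $f,g$ are similar if $f\preceq g$ or $g\preceq f$. Similarity is an equivalence relation; its classes are blocks, each has a $\preceq$-least element, and the arity of a block is the arity of that least element. A clone on a $\tau$-algebra $\mathbf A$ is a set of finitary operations on $A$ (nullary included) containing all projections and all basic operations, closed under composition and under restriction (dropping a last argument on which the operation does not depend). *)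

From mathcomp Require Import all_boot.
Set Implicit Arguments. Unset Strict Implicit. Unset Printing Implicit Defensive.

(* Clone tau-algebra.  [e i] stands for e_i (i >= 1); [e 0] is an unused
   junk value (only ever appears as an irrelevant [nth] default).
   [q n x ys] is q_n(x, y_1, ..., y_n) with ys an n-tuple. *)
Definition etuple (C : Type) (e : nat -> C) (n : nat) : n.-tuple C :=
  [tuple e i.+1 | i < n].

Record cloneAlg (sym : Type) (ar : sym -> nat) := CloneAlg {
  carrier :> Type;
  sig : forall s : sym, (ar s).-tuple carrier -> carrier;
  q : forall n, carrier -> n.-tuple carrier -> carrier;
  e : nat -> carrier;
  axC1 : forall n i (ys : n.-tuple carrier), 1 <= i <= n ->
           q (e i) ys = nth (e 0) ys i.-1;
  axC2 : forall n j (ys : n.-tuple carrier), n < j -> q (e j) ys = e j;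
  axC3 : forall n (x : carrier), q x (etuple e n) = x;
  axC4 : forall k n (x : carrier) (ys : k.-tuple carrier), k < n ->
           q x ys = q x [tuple nth (e i.+1) ys i | i < n];
  axC5 : forall n (x : carrier) (ys zs : n.-tuple carrier),
           q (q x ys) zs = q x (map_tuple (fun y => q y zs) ys);
  axC6 : forall (s : sym) (xs : (ar s).-tuple carrier) n (ys : n.-tuple carrier),
           q (sig xs) ys = sig (map_tuple (fun x => q x ys) xs)
}.

Record op (A : Type) := Op { arity : nat; app : arity.-tuple A -> A }.
Arguments app {A} o _.

Section Defs.
Variables (sym : Type) (ar : sym -> nat) (C : cloneAlg ar).

Definition indep (a : C) (n : nat) : Prop :=
  q a [tuple e C (if i.+1 == n then n.+1 else i.+1) | i < n] = a.

Definition dim_le (a : C) (k : nat) : Prop := forall n, k < n -> indep a n.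

Definition has_dim (a : C) (k : nat) : Prop :=
  dim_le a k /\ (k = 0 \/ ~ indep a k).

Definition fin_dim (a : C) : Prop := exists k, dim_le a k.


Definition representable (f : op C) : Prop :=
  dim_le (app f (etuple (e C) (arity f))) (arity f) /\
  forall t, app f t = q (app f (etuple (e C) (arity f))) t.

Definition RC : op C -> Prop := representable.

Definition Rof (a : C) : op C -> Prop :=
  fun f => representable f /\ app f (etuple (e C) (arity f)) = a.
End Defs.

Definition op_le (A : Type) (f g : op A) : Prop :=
  exists H : arity f <= arity g,
    forall (a : (arity f).-tuple A) (b : (arity g - arity f).-tuple A),
      app f a = app g (tcast (subnKC H) [tuple of a ++ b]).

Definition similar (A : Type) (f g : op A) : Prop := op_le f g \/ op_le g f.

Definition is_block (A : Type) (B : op A -> Prop) : Prop :=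
  exists f, forall g, B g <-> similar f g.

Definition block_arity (A : Type) (B : op A -> Prop) (k : nat) : Prop :=
  exists f, [/\ B f, forall g, B g -> op_le f g & arity f = k].

Definition indep_last (A : Type) n (f : n.+1.-tuple A -> A) : Prop :=
  forall (t : n.-tuple A) x y, f [tuple of rcons t x] = f [tuple of rcons t y].

Definition is_clone (A : Type) (sym : Type) (ar : sym -> nat)
  (sg : forall s, (ar s).-tuple A -> A) (S : op A -> Prop) : Prop :=
  [/\
      forall n (i : 'I_n), S (Op (fun t : n.-tuple A => tnth t i)),
      forall s, S (Op (sg s)),
      forall f, S f -> forall m (gs : 'I_(arity f) -> m.-tuple A -> A),
        (forall i, S (Op (gs i))) ->
        S (Op (fun t : m.-tuple A => app f [tuple gs i t | i < arity f])) &
      forall n (f : n.+1.-tuple A -> A), S (Op f) -> indep_last f ->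
        forall g : n.-tuple A -> A,
          (forall t x, g t = f [tuple of rcons t x]) -> S (Op g)].

From mathcomp Require Import all_boot.
Set Implicit Arguments. Unset Strict Implicit. Unset Printing Implicit Defensive.

(* The heart of the matter is that q_m(x, -), for
   x of dimension at most n <= m, ignores its arguments past the n-th: the
   independence of x from e_(k+1) lets C5 replace the (k+1)-st argument of
   q_(k+1)(x, -) by e_(k+2), which C2 then makes constant.  Hence two
   representable operations with the same value at the generators differ
   only by dummy trailing arguments, so R(a) is the similarity class of
   q_n(a, -) for any n >= dim a, and its least element is q_(dim a)(a, -).
   Closure under composition is C5 for elements of bounded dimension. *)

Lemma tuple_nthE (T : Type) n (t : n.-tuple T) d : t = [tuple nth d t i | i < n].
Proof. by apply: eq_from_tnth => i; rewrite tnth_mktuple (tnth_nth d). Qed.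

Lemma nth_mktuple_nat (T : Type) n (F : nat -> T) d i :
  i < n -> nth d [tuple F i | i < n] i = F i.
Proof. by move=> lt_in; rewrite (nth_mktuple _ d (Ordinal lt_in)). Qed.

Lemma eq_mktuple_nat (T : Type) n (F G : nat -> T) :
  (forall i, i < n -> F i = G i) -> [tuple F i | i < n] = [tuple G i | i < n].
Proof. by move=> FG; apply: eq_mktuple => i; apply: FG. Qed.

Lemma tcast_cat_mktuple (T : Type) m n (H : m + (n - m) = n) (F : nat -> T) :
  tcast H [tuple of [tuple F i | i < m] ++ [tuple F (m + i) | i < n - m]]
  = [tuple F i | i < n].
Proof.
have le_mn : m <= n by rewrite -H leq_addr.
apply: eq_from_tnth => i; rewrite tcastE tnth_mktuple (tnth_nth (F 0)) nth_cat.
rewrite size_tuple; case: ltnP => [lt_im | le_mi]; first exact: nth_mktuple_nat.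
rewrite (@nth_mktuple_nat _ (n - m) (fun k => F (m + k))) ?subnKC //.
by rewrite ltn_sub2rE //; apply: ltn_ord i.
Qed.

Lemma rcons_mktuple (T : Type) n (t : n.-tuple T) y d :
  [tuple of rcons t y] = [tuple (if i < n then nth d t i else y) | i < n.+1].
Proof.
apply: eq_from_tnth => i; rewrite tnth_mktuple (tnth_nth y) /= nth_rcons size_tuple.
case: ltnP => [lt_in | le_ni]; first by apply: set_nth_default; rewrite size_tuple.
by have := ltn_ord i; rewrite ltnS => le_in; rewrite eqn_leq le_in le_ni.
Qed.

Section CloneAlgebra.
Variables (sym : Type) (ar : sym -> nat) (C : cloneAlg ar).

Local Notation gens f := (app f (etuple (e C) (arity f))).

(* [F i] is the argument y_(i+1) of q_m(x, y_1, ..., y_m). *)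
Definition qf m (x : C) (F : nat -> C) := q x [tuple F i | i < m].

Definition qop (x : C) n : op C := @Op C n (q x).

Lemma qfE m (t : m.-tuple C) d (x : C) : q x t = qf m x (fun i => nth d t i).
Proof. by rewrite /qf -tuple_nthE. Qed.

Lemma eq_qf m (x : C) F G : (forall i, i < m -> F i = G i) -> qf m x F = qf m x G.
Proof. by move=> FG; rewrite /qf (eq_mktuple_nat FG). Qed.

Lemma eq_qfS m (x : C) F G :
  (forall i, i < m -> F i = G i) -> F m = G m -> qf m.+1 x F = qf m.+1 x G.
Proof.
by move=> FG FGm; apply: eq_qf => i; rewrite ltnS leq_eqVlt => /predU1P [-> | /FG].
Qed.

Lemma qf_e m i F : i < m -> qf m (e C i.+1) F = F i.
Proof. by move=> lt_im; rewrite /qf axC1 ?nth_mktuple_nat. Qed.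

Lemma qf_e_gt m j F : m < j -> qf m (e C j) F = e C j.
Proof. exact: axC2. Qed.

Lemma qf_id m (x : C) : qf m x (fun i => e C i.+1) = x.
Proof. exact: axC3. Qed.

Lemma qf_widen k n (x : C) F :
  k <= n -> qf k x F = qf n x (fun i => if i < k then F i else e C i.+1).
Proof.
rewrite leq_eqVlt => /predU1P [<- | lt_kn]; first by apply: eq_qf => i ->.
rewrite /qf (axC4 _ _ lt_kn); congr q; apply: eq_mktuple => i /=.
case: ifP => [lt_ik | /negbT]; first by rewrite nth_mktuple_nat.
by rewrite -leqNgt => le_ki; rewrite nth_default // size_map size_enum_ord.
Qed.

Lemma qf_comp n (x : C) G F : qf n (qf n x G) F = qf n x (fun i => qf n (G i) F).
Proof.
by rewrite /qf axC5; congr q; apply: eq_from_tnth => i; rewrite tnth_map !tnth_mktuple.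
Qed.

Lemma q_e n (i : 'I_n) (t : n.-tuple C) : q (e C i.+1) t = tnth t i.
Proof. by rewrite (qfE t (e C 0)) qf_e // (tnth_nth (e C 0)). Qed.

Lemma indepE (x : C) n :
  indep x n = (qf n x (fun i => e C (if i.+1 == n then n.+1 else i.+1)) = x).
Proof. by []. Qed.

Lemma dim_le_widen (x : C) n m : dim_le x n -> n <= m -> dim_le x m.
Proof. by move=> dx le_nm j lt_mj; apply: dx; apply: leq_ltn_trans lt_mj. Qed.

Lemma dim_le_pred (x : C) k : dim_le x k -> indep x k -> dim_le x k.-1.
Proof.
move=> dx ix j; case: (ltngtP k j) => [/dx // | lt_jk | <- //].
by case: k lt_jk {dx ix} => // k; rewrite ltnS leqNgt => /negbTE ->.
Qed.

Lemma qf_indep_top (x : C) m F :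
  indep x m.+1 -> qf m.+1 x F = qf m.+1 x (fun i => if i < m then F i else e C m.+2).
Proof.
rewrite indepE => ix; rewrite -{1}ix qf_comp; apply: eq_qfS => [i lt_im|].
  by rewrite eqSS (ltn_eqF lt_im) lt_im qf_e // ltnW.
by rewrite eqxx ltnn qf_e_gt.
Qed.

Lemma qf_succ (x : C) m F : dim_le x m -> qf m.+1 x F = qf m x F.
Proof.
move=> dx; have ix := dx m.+1 (ltnSn m).
rewrite (qf_widen _ _ (leqnSn m)) [LHS]qf_indep_top // [RHS]qf_indep_top //.
by apply: eq_qf => i _; case: ifP.
Qed.

Lemma qf_lift (x : C) n m F : dim_le x n -> n <= m -> qf m x F = qf n x F.
Proof.
move=> dx; elim: m => [|m IH]; first by rewrite leqn0 => /eqP ->.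
rewrite leq_eqVlt => /predU1P [-> // | lt_nm].
by rewrite qf_succ ?IH //; apply: dim_le_widen dx _.
Qed.

Lemma dim_le_narrow (x : C) n m :
  dim_le x n -> m <= n ->
  (forall F G, (forall i, i < m -> F i = G i) -> qf n x F = qf n x G) -> dim_le x m.
Proof.
move=> dx le_mn xloc j lt_mj; case: (ltnP n j) => [/dx // | le_jn].
rewrite indepE (qf_widen _ _ le_jn) -[RHS](qf_id n x); apply: xloc => i lt_im.
by rewrite (ltn_trans lt_im lt_mj) ltn_eqF // (leq_ltn_trans lt_im lt_mj).
Qed.

Lemma q_comp_dim (x : C) n m (ys : n.-tuple C) (zs : m.-tuple C) :
  dim_le x n -> q (q x ys) zs = q x (map_tuple (fun y => q y zs) ys).
Proof.
move=> dx; have le_nN := leq_maxl n m; have le_mN := leq_maxr n m.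
rewrite (qfE ys (e C 0)) (qfE zs (e C 0)) (qfE (map_tuple _ ys) (e C 0)).
rewrite -(qf_lift _ dx le_nN) (qf_widen _ _ le_mN) qf_comp (qf_lift _ dx le_nN).
apply: eq_qf => i lt_in; rewrite -qf_widen // (nth_map (e C 0)) ?size_tuple //.
by rewrite -qfE.
Qed.

Lemma dim_le_e i m : i < m -> dim_le (e C i.+1) m.
Proof.
move=> lt_im j lt_mj; have lt_Sij := leq_ltn_trans lt_im lt_mj.
by rewrite indepE qf_e ?(ltn_eqF lt_Sij) // ltnW.
Qed.

Lemma dim_le_q (x : C) n m (ys : n.-tuple C) :
  dim_le x n -> (forall i, dim_le (tnth ys i) m) -> dim_le (q x ys) m.
Proof.
move=> dx dys j lt_mj; rewrite /indep q_comp_dim //; congr q.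
by apply: eq_from_tnth => i; rewrite tnth_map; apply: dys.
Qed.

Lemma dim_le_sig (s : sym) (xs : (ar s).-tuple C) m :
  (forall i, dim_le (tnth xs i) m) -> dim_le (sig xs) m.
Proof.
move=> dxs j lt_mj; rewrite /indep axC6; congr sig.
by apply: eq_from_tnth => i; rewrite tnth_map; apply: dxs.
Qed.

Lemma Rof_of_qE (a : C) (g : op C) :
  dim_le a (arity g) -> (forall t, app g t = q a t) -> Rof a g.
Proof.
move=> da ga; have ga' : gens g = a by rewrite ga axC3.
by split; [split|]; rewrite ga'.
Qed.

Lemma Rof_qop (a : C) n : dim_le a n -> Rof a (qop a n).
Proof. by move=> da; apply: Rof_of_qE. Qed.

Lemma op_le_gens (f g : op C) : op_le f g -> gens f = gens g.
Proof.
case=> le_fg fg; have := fg (etuple (e C) (arity f))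
  [tuple e C (arity f + i).+1 | i < arity g - arity f].
by rewrite /etuple (tcast_cat_mktuple _ (fun i => e C i.+1)).
Qed.

Lemma representable_op_le (f g : op C) :
  representable f -> representable g -> gens f = gens g -> arity f <= arity g ->
  op_le f g.
Proof.
move=> [df qf_f] [_ qf_g] fg le_fg; exists le_fg => t b.
rewrite qf_f qf_g -fg (qfE t (e C 0)) (qfE (tcast _ _) (e C 0)) val_tcast.
rewrite (qf_lift _ df le_fg); apply: eq_qf => i lt_if.
by rewrite nth_cat size_tuple lt_if.
Qed.

Lemma similar_representable (f g : op C) :
  representable f -> representable g -> similar f g <-> gens f = gens g.
Proof.
move=> rf rg; split=> [[/op_le_gens | /op_le_gens /esym] // | fg].
by case: (leqP (arity f) (arity g)) => [le_fg | /ltnW le_gf];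
  [left | right]; apply: representable_op_le.
Qed.

Lemma Rof_of_qop_le (a : C) n (g : op C) :
  dim_le a n -> op_le (qop a n) g -> Rof a g.
Proof.
move=> da [/= le_ng qg]; apply: Rof_of_qE; first exact: dim_le_widen da le_ng.
move=> s; have := qg [tuple nth (e C 0) s i | i < n]
  [tuple nth (e C 0) s (n + i) | i < arity g - n].
rewrite tcast_cat_mktuple -tuple_nthE => <-.
by rewrite [RHS](qfE s (e C 0)) (qf_lift _ da le_ng).
Qed.

Lemma Rof_of_le_qop (a : C) n (g : op C) :
  dim_le a n -> op_le g (qop a n) -> Rof a g.
Proof.
move=> da [/= le_gn gq]; set m := arity g in le_gn gq *.
have g_qf (F : nat -> C) : app g [tuple F i | i < m] = qf n a F.
  by rewrite (gq _ [tuple F (m + i) | i < n - m]) tcast_cat_mktuple.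
apply: Rof_of_qE.
  apply: (dim_le_narrow da le_gn) => F G FG.
  by rewrite -!g_qf (eq_mktuple_nat FG).
move=> t; rewrite [RHS](qfE t (e C 0)) (qf_widen _ _ le_gn) -g_qf; congr (app g _).
by apply: eq_from_tnth => i; rewrite tnth_mktuple ltn_ord (tnth_nth (e C 0)).
Qed.

Lemma Rof_similar_qop (a : C) n (g : op C) :
  dim_le a n -> Rof a g <-> similar (qop a n) g.
Proof.
move=> da; have [rq qa] := Rof_qop da.
split=> [[rg ga] | [/(Rof_of_qop_le da) | /(Rof_of_le_qop da)] //].
by apply/similar_representable => //; rewrite qa.
Qed.

Lemma Rof_block (a : C) : fin_dim a -> is_block (Rof a).
Proof. by case=> n da; exists (qop a n) => g; apply: Rof_similar_qop. Qed.

Lemma Rof_inj (a b : C) : fin_dim a -> (forall f, Rof a f <-> Rof b f) -> a = b.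
Proof. by case=> n da ab; have [_ <-] := (ab _).1 (Rof_qop da); case: (Rof_qop da). Qed.

Lemma RC_Rof (f : op C) : RC f <-> exists c : C, fin_dim c /\ Rof c f.
Proof.
split=> [rf | [c [_ []]] //].
by exists (gens f); split=> //; exists (arity f); case: rf.
Qed.

Lemma RC_proj n (i : 'I_n) : RC (Op (fun t : n.-tuple C => tnth t i)).
Proof.
apply: (@Rof_of_qE (e C i.+1) _ _ _).1 => [|t]; first exact: dim_le_e.
by rewrite q_e.
Qed.

Lemma RC_sig (s : sym) : RC (Op (@sig _ _ C s)).
Proof.
apply: (@Rof_of_qE (sig (etuple (e C) (ar s))) _ _ _).1 => [|t].
  by apply: dim_le_sig => i; rewrite tnth_mktuple; apply: dim_le_e.
rewrite axC6; congr sig; apply: eq_from_tnth => i.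
by rewrite tnth_map tnth_mktuple q_e.
Qed.

Lemma RC_comp (f : op C) m (gs : 'I_(arity f) -> m.-tuple C -> C) :
  RC f -> (forall i, RC (Op (gs i))) ->
  RC (Op (fun t : m.-tuple C => app f [tuple gs i t | i < arity f])).
Proof.
move=> [df qf_f] rgs; set ys := [tuple gs i (etuple (e C) m) | i < arity f].
apply: (@Rof_of_qE (q (gens f) ys) _ _ _).1 => [|t] /=.
  by apply: dim_le_q => // i; rewrite tnth_mktuple; case: (rgs i).
rewrite qf_f q_comp_dim //; congr q; apply: eq_from_tnth => i.
by rewrite tnth_mktuple tnth_map tnth_mktuple; apply: (rgs i).2.
Qed.

Lemma RC_restrict n (f : n.+1.-tuple C -> C) (g : n.-tuple C -> C) :
  RC (Op f) -> indep_last f -> (forall t y, g t = f [tuple of rcons t y]) ->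
  RC (Op g).
Proof.
move=> [/= df qf_f] f_last gf; set x := f (etuple (e C) n.+1) in df qf_f *.
have f_rcons (t : n.-tuple C) y :
    f [tuple of rcons t y] = qf n.+1 x (fun i => if i < n then nth (e C 0) t i else y).
  by rewrite qf_f (rcons_mktuple _ _ (e C 0)).
have f_gens (y : C) : f [tuple of rcons (etuple (e C) n) y]
    = qf n.+1 x (fun i => if i < n then e C i.+1 else y).
  rewrite f_rcons; apply: eq_qf => i _; case: ltnP => // lt_in.
  exact: (@nth_mktuple_nat _ n (fun k => e C k.+1)).
apply: (@Rof_of_qE x _ _ _).1 => [|t] /=.
  apply: (dim_le_pred df); rewrite indepE.
  transitivity (f [tuple of rcons (etuple (e C) n) (e C n.+2)]).
    rewrite f_gens; apply: eq_qfS => [i lt_in|]; rewrite eqSS.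
      by rewrite (ltn_eqF lt_in) lt_in.
    by rewrite eqxx ltnn.
  rewrite (f_last _ _ (e C n.+1)) f_gens -[RHS](qf_id n.+1 x).
  by apply: eq_qfS => [i ->|]; rewrite ?ltnn.
rewrite (gf t (e C n.+1)) f_rcons [RHS](qfE t (e C 0)) (qf_widen _ _ (leqnSn n)).
by apply: eq_qfS => [i ->|]; rewrite ?ltnn.
Qed.

Lemma Rof_arity_ge (a : C) (g : op C) k : Rof a g -> has_dim a k -> k <= arity g.
Proof.
move=> [[dg _] <-] [_ [-> // | not_indep]].
by rewrite leqNgt; apply/negP => /dg.
Qed.

Lemma block_arity_Rof (a : C) k : block_arity (Rof a) k <-> has_dim a k.
Proof.
split=> [[f [[[df _] fa] f_min fk]] | ak].
  have da : dim_le a k by rewrite -fk -fa.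
  split=> //; case: (posnP k) => [-> | k_gt0]; [by left | right] => ia.
  have [/= + _] := f_min _ (Rof_qop (dim_le_pred da ia)).
  by rewrite fk -ltnS prednK // ltnn.
have [rq qa] := Rof_qop ak.1; exists (qop a k); split=> // g rg.
apply: representable_op_le => //; first by case: rg.
  by rewrite qa; case: rg.
exact: Rof_arity_ge rg ak.
Qed.

End CloneAlgebra.

Unset Implicit Arguments. Set Strict Implicit.

Theorem proposition7p4 (sym : Type) (ar : sym -> nat) (C : cloneAlg ar)
  (a b : C) (fa : fin_dim a) (fb : fin_dim b) :
  [/\ (* (1) *)
      (forall f g : op C, RC f -> RC g ->
         (similar f g <->
          app f (etuple (e C) (arity f)) = app g (etuple (e C) (arity g)))),
      (* (2) *)
      is_block (Rof a),
      (* (3) *)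
      ((forall f, Rof a f <-> Rof b f) -> a = b),
      (* (4) *)
      ((forall f, RC f <-> exists c : C, fin_dim c /\ Rof c f) /\
       is_clone (@sig _ _ C) (@RC _ _ C)) &
      (* (5) *)
      (forall k, block_arity (Rof a) k <-> has_dim a k)].
Proof.
split.
- exact: similar_representable.
- exact: Rof_block.
- exact: Rof_inj.
- split; first exact: RC_Rof.
  split; [exact: RC_proj | exact: RC_sig | | ].
    by move=> f rf m gs rgs; apply: RC_comp.
  by move=> n f rf f_last g gf; apply: RC_restrict gf.
- exact: block_arity_Rof.
Qed.
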